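(* In incentivized exploration with two arms, where the prior means satisfy $\mu_1^0\ge\mu_2^0$, the Bayesian-greedy algorithm never chooses arm $2$ with probability at least $\mu_1^0-\mu_2^0$.
   Context: Two arms; a mean reward vector $\mu=(\mu_1,\mu_2)\in[0,1]^2$ is drawn from a Bayesian prior $\mathcal{P}$ (arbitrary, possibly correlated); there is a known family of reward distributions $(\mathcal{D}_x)_{x\in[0,1]}$ on $[0,1]$, each with mean $x$ and finitely many possible values; whenever arm $a$ is chosen, its reward is drawn independently from $\mathcal{D}_{\mu_a}$. Prior means: $\mu_a^0=\mathbb{E}[\mu_a]$. Over $T$ rounds, the Bayesian-greedy algorithm chooses, in each round $t$, an arm in $\arg\max_{a}\mathbb{E}[\mu_a\mid H_{t-1}]$, where $H_{t-1}=((a_s,r_s):s\in[t-1])$ is the history of chosen arms and rewards and the expectation is over the prior. *)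

From mathcomp Require Import all_boot all_order all_algebra.
From mathcomp Require Import all_classical all_reals all_analysis.
Set Implicit Arguments. Unset Strict Implicit. Unset Printing Implicit Defensive.
Import Order.TTheory GRing.Theory Num.Theory.
Local Open Scope classical_set_scope.
Local Open Scope ring_scope.

(* Arms are 'I_2 : arm 1 of the paper is ord0, arm 2 is (1 : 'I_2). *)

(* A reward family (D_x)_{x in [0,1]}: D x v is the probability that a reward
   drawn from D_x equals v.  Each D_x has finite support contained in [0,1]
   and mean x. *)
Definition reward_family (R : realType) (D : R -> R -> R) : Prop :=
  forall x : R, 0 <= x <= 1 ->
    exists s : seq R,
      [/\ uniq s,
          (forall v, v \notin s -> D x v = 0),
          (forall v, 0 <= D x v),
          (forall v, v \in s -> 0 <= v <= 1)
        & (\sum_(v <- s) D x v = 1 /\ \sum_(v <- s) D x v * v = x)].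

Definition observed (d : measure_display) (Omega : measurableType d)
  (R : realType) (a : nat -> Omega -> 'I_2) (tape : nat -> 'I_2 -> Omega -> R)
  (s : nat) : Omega -> R :=
  fun w => tape s (a s w) w.

Definition history_gen (d : measure_display) (Omega : measurableType d)
  (R : realType) (a : nat -> Omega -> 'I_2) (r : nat -> Omega -> R) (t : nat)
  : set (set Omega) :=
  [set A | exists s, (s < t)%N /\
     ((exists i : 'I_2, A = a s @^-1` [set i]) \/
      (exists B : set R, measurable B /\ A = r s @^-1` B))].

Definition history_sigma (d : measure_display) (Omega : measurableType d)
  (R : realType) (a : nat -> Omega -> 'I_2) (r : nat -> Omega -> R) (t : nat)
  : set (set Omega) :=
  <<s history_gen a r t >>.

Definition cond_exp_version (d : measure_display) (Omega : measurableType d)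
  (R : realType) (P : probability Omega R) (G : set (set Omega))
  (X Y : Omega -> R) : Prop :=
  [/\ (forall B : set R, measurable B -> G (Y @^-1` B)),
      P.-integrable setT (EFin \o Y)
    & forall A, G A ->
        (\int[P]_(w in A) (Y w)%:E = \int[P]_(w in A) (X w)%:E)%E].

(* The Bayesian-greedy rule: in each round t (0-based), the chosen arm
   maximizes (a version of) E[mu_i | H_{t}] where H_t is the history of
   rounds s < t. *)
Definition bayes_greedy (d : measure_display) (Omega : measurableType d)
  (R : realType) (P : probability Omega R) (mu : 'I_2 -> Omega -> R)
  (a : nat -> Omega -> 'I_2) (tape : nat -> 'I_2 -> Omega -> R) : Prop :=
  forall t : nat, exists Y : 'I_2 -> Omega -> R,
    (forall i, cond_exp_version P (history_sigma a (observed a tape) t)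
                                (mu i) (Y i)) /\
    (forall w j, Y j w <= Y (a t w) w).

(* Bayesian model: mu is the (prior-distributed) mean vector in [0,1]^2,
   and conditionally on mu, the reward-tape entries tape t i (reward of arm i
   if pulled in round t) are independent with law D_{mu_i}. *)
Definition bandit_model (d : measure_display) (Omega : measurableType d)
  (R : realType) (P : probability Omega R) (D : R -> R -> R)
  (mu : 'I_2 -> Omega -> R) (tape : nat -> 'I_2 -> Omega -> R) : Prop :=
  [/\ forall i, measurable_fun setT (mu i),
      forall i w, 0 <= mu i w <= 1,
      forall t i, measurable_fun setT (tape t i)
    & forall (n : nat) (ts : 'I_n -> nat) (arms : 'I_n -> 'I_2)
             (vs : 'I_n -> R) (B : 'I_2 -> set R),
        injective (fun k => (ts k, arms k)) ->
        (forall i, measurable (B i)) ->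
        P ([set w | forall i, B i (mu i w)] `&`
           [set w | forall k, tape (ts k) (arms k) w = vs k]) =
        (\int[P]_(w in [set w | forall i, B i (mu i w)])
           (\prod_(k < n) D (mu (arms k) w) (vs k))%:E)%E].

Definition arm1 : 'I_2 := ord0.
Definition arm2 : 'I_2 := ord_max.

(* Let A_t be the event that arm 1 is pulled in every round before t.  By
   induction on t we find U_t in sigma(H_t) with U_t included in A_t and
   E[(mu_1 - mu_2) 1_{U_t}] >= mu_1^0 - mu_2^0, taking
   U_{t+1} = U_t /\ {E[mu_2 | H_t] < E[mu_1 | H_t]}: since U_t is
   H_t-measurable, the integral over U_t may be computed with the posterior
   means, and discarding the part where they favour arm 2 can only increase
   it, while on the rest the greedy rule pulls arm 1.  As the means lie in
   [0, 1], finally E[(mu_1 - mu_2) 1_{U_T}] <= P(U_T) <= P(A_T). *)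

From mathcomp Require Import all_boot all_order all_algebra.
From mathcomp Require Import all_classical all_reals all_analysis.
Import Order.TTheory GRing.Theory Num.Theory.
Local Open Scope classical_set_scope.
Local Open Scope ring_scope.

Lemma integral_le_setI (d : measure_display) (T : measurableType d)
  (R : realType) (m : measure T R) (D V : set T) (h : T -> \bar R) :
  measurable D -> measurable V -> m.-integrable D h ->
  (forall x, D x -> ~ V x -> (h x <= 0)%E) ->
  (\int[m]_(x in D) h x <= \int[m]_(x in D `&` V) h x)%E.
Proof.
move=> mD mV ih hle0.
have DE : D = (D `&` V) `|` (D `&` ~` V) by rewrite -setIUr setUCr setIT.
have mDV : measurable (D `&` V) by exact: measurableI.
have mDnV : measurable (D `&` ~` V).
  by apply: measurableI => //; exact: measurableC.
rewrite [in leLHS]DE integral_setU //; first last.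
- by rewrite /disj_set setIACA setICr setI0.
- by rewrite -DE; exact: measurable_int ih.
apply: geeDl; rewrite -(integral0 m (D `&` ~` V)).
apply: le_integral => //; last by move=> x /[!inE] -[Dx nVx]; exact: hle0.
- exact: integrableS mD _ _ ih.
- exact: integrable0.
Qed.

Lemma integralB_le_measure (d : measure_display) (T : measurableType d)
  (R : realType) (m : measure T R) (U : set T) (f g : T -> R) :
  measurable U -> measurable_fun U f ->
  (forall x, 0 <= f x <= 1) -> (forall x, 0 <= g x) ->
  (\int[m]_(x in U) (f x)%:E - \int[m]_(x in U) (g x)%:E <= m U)%E.
Proof.
move=> mU mf f01 g0; rewrite -[leRHS]sube0; apply: leeB.
- rewrite -[leRHS]mul1e -integral_cst //; apply: ge0_le_integral => //.
  + by move=> x _; rewrite lee_fin; case/andP: (f01 x).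
  + exact/measurable_realfun.measurable_EFinP.
  + by move=> x _; rewrite lee_fin; case/andP: (f01 x).
- by apply: integral_ge0 => x _; rewrite lee_fin.
Qed.

Lemma g_sigma_setI_ltr {T : pointedType} {R : realType} {G : set (set T)}
  {f g : T -> R} {U : set T} :
  (forall B : set R, measurable B -> <<s G >> (f @^-1` B)) ->
  (forall B : set R, measurable B -> <<s G >> (g @^-1` B)) ->
  <<s G >> U -> <<s G >> (U `&` [set x | f x < g x]).
Proof.
move=> mf mg GU.
have mfG : measurable_fun (setT : set (g_sigma_algebraType G)) f.
  by move=> _ B mB; rewrite setTI; exact: mf.
have mgG : measurable_fun (setT : set (g_sigma_algebraType G)) g.
  by move=> _ B mB; rewrite setTI; exact: mg.
have := measurable_realfun.measurable_fun_ltr mfG mgG measurableT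
  (Y := [set true]) I.
rewrite setTI; exact: (@measurableI _ (g_sigma_algebraType G)).
Qed.

Definition integral_gap {d : measure_display} {T : measurableType d}
  {R : realType} (m : measure T R) (f g : T -> R) (U : set T) : \bar R :=
  (\int[m]_(x in U) (f x)%:E - \int[m]_(x in U) (g x)%:E)%E.

Lemma integral_gap_cond_exp_setI (d : measure_display) (T : measurableType d)
  (R : realType) (P : probability T R) (G : set (set T))
  (f g Yf Yg : T -> R) (U : set T) :
  <<s G >> `<=` measurable ->
  cond_exp_version P <<s G >> f Yf -> cond_exp_version P <<s G >> g Yg ->
  <<s G >> U ->
  (integral_gap P f g U <=
   integral_gap P f g (U `&` [set x | (Yg x < Yf x)%R]))%E.
Proof.
move=> Gm [mYf iYf eYf] [mYg iYg eYg] GU.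
have GUV := g_sigma_setI_ltr mYg mYf GU.
have mU := Gm _ GU; have mUV := Gm _ GUV.
have iY Y E : measurable E -> P.-integrable setT (EFin \o Y) ->
    P.-integrable E (EFin \o Y).
  by move=> mE; exact: integrableS measurableT mE (@subsetT _ E).
rewrite /integral_gap -(eYf _ GU) -(eYg _ GU) -(eYf _ GUV) -(eYg _ GUV).
rewrite -!integralB_EFin //; try exact: iY.
apply: integral_le_setI => //.
- rewrite -[X in measurable X]setTI; apply: Gm.
  exact: g_sigma_setI_ltr mYg mYf (@measurableT _ (g_sigma_algebraType G)).
- exact: integrableB (iY _ _ mU iYf) (iY _ _ mU iYg).
- by move=> x _ /negP; rewrite -leNgt lee_fin subr_le0.
Qed.

Lemma arm_cases (i : 'I_2) : i = arm1 \/ i = arm2.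
Proof. by case: i => [[|[|//]] ?]; [left|right]; apply: val_inj. Qed.

Lemma history_sigma_mono {R : realType} {d : measure_display}
  {Omega : measurableType d} {a : nat -> Omega -> 'I_2} {r : nat -> Omega -> R}
  {s t : nat} :
  (s <= t)%N -> history_sigma a r s `<=` history_sigma a r t.
Proof.
move=> st; apply: sub_smallest2r; first exact: smallest_sigma_algebra.
by move=> A [u [ut HA]]; exists u; split => //; exact: leq_trans st.
Qed.

Lemma history_sigma_measurable {R : realType} {d : measure_display}
  {Omega : measurableType d} (a : nat -> Omega -> 'I_2)
  (tape : nat -> 'I_2 -> Omega -> R) (t : nat) :
  (forall s i, measurable (a s @^-1` [set i])) ->
  (forall s i, measurable_fun setT (tape s i)) ->
  history_sigma a (observed a tape) t `<=` measurable.
Proof.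
move=> ma mtape; apply: smallest_sub; first exact: sigma_algebra_measurable.
move=> A [s [_ [[i ->]|[B [mB ->]]]]]; first exact: ma.
have -> : observed a tape s @^-1` B =
    (a s @^-1` [set arm1] `&` tape s arm1 @^-1` B) `|`
    (a s @^-1` [set arm2] `&` tape s arm2 @^-1` B).
  apply/seteqP; split => w /=; rewrite /observed.
    by case: (arm_cases (a s w)) => ->; [left|right].
  by case=> -[-> ?].
by apply: measurableU; apply: measurableI => //;
  rewrite -[X in measurable X]setTI; exact: mtape.
Qed.

Definition pulls_only_arm1 {d : measure_display} {Omega : measurableType d}
  (a : nat -> Omega -> 'I_2) (t : nat) : set Omega :=
  \bigcap_(s in [set s | (s < t)%N]) a s @^-1` [set arm1].

Lemma measurable_pulls_only_arm1 {d : measure_display}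
  {Omega : measurableType d} (a : nat -> Omega -> 'I_2) (t : nat) :
  (forall s i, measurable (a s @^-1` [set i])) ->
  measurable (pulls_only_arm1 a t).
Proof. by move=> ma; apply: bigcap_measurableType => s _; exact: ma. Qed.

Section BayesianGreedy.
Variables (R : realType) (d : measure_display) (Omega : measurableType d).
Variables (P : probability Omega R) (mu : 'I_2 -> Omega -> R).
Variables (tape : nat -> 'I_2 -> Omega -> R) (a : nat -> Omega -> 'I_2).
Hypothesis tape_meas : forall t i, measurable_fun setT (tape t i).
Hypothesis a_meas : forall t i, measurable (a t @^-1` [set i]).
Hypothesis greedy : bayes_greedy P mu a tape.

Let gap := integral_gap P (mu arm1) (mu arm2).

Lemma greedy_history_event (t : nat) : exists U,
  [/\ history_sigma a (observed a tape) t U, U `<=` pulls_only_arm1 a t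
    & (gap setT <= gap U)%E].
Proof.
elim: t => [|t [U [HU UA gapU]]].
  exists setT; split => //.
  exact: (@measurableT _ (g_sigma_algebraType (history_gen a _ 0))).
have [Y [cY argmaxY]] := greedy t.
have [mY1 _ _] := cY arm1; have [mY2 _ _] := cY arm2.
have HM := history_sigma_measurable a tape t a_meas tape_meas.
exists (U `&` [set w | Y arm2 w < Y arm1 w]); split.
- exact: history_sigma_mono (leqnSn t) _ (g_sigma_setI_ltr mY2 mY1 HU).
- move=> w [/UA Uw Yw] s /=.
  rewrite ltnS leq_eqVlt => /predU1P[->|]; last exact: Uw.
  case: (arm_cases (a t w)) => // at2.
  by have := argmaxY w arm1; rewrite at2 leNgt Yw.
- apply: (le_trans gapU); exact: integral_gap_cond_exp_setI HM (cY _) (cY _) HU.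
Qed.

Hypothesis mu_meas : forall i, measurable_fun setT (mu i).
Hypothesis mu01 : forall i w, 0 <= mu i w <= 1.

Lemma integral_gap_le_pulls_only_arm1 (T : nat) :
  (gap setT <= P (pulls_only_arm1 a T))%E.
Proof.
have [U [HU UA gapU]] := greedy_history_event T.
have mU := history_sigma_measurable a tape T a_meas tape_meas _ HU.
apply: (le_trans gapU); apply: (@le_trans _ _ (P U)).
  apply: integralB_le_measure => //.
  - exact: measurable_funS (mu_meas arm1).
  - by move=> w; case/andP: (mu01 arm2 w).
by apply: le_measure; rewrite ?inE //; exact: measurable_pulls_only_arm1.
Qed.

End BayesianGreedy.

Theorem theorem11p7 (R : realType) (d : measure_display) (Omega : measurableType d)
  (P : probability Omega R) (D : R -> R -> R)
  (mu : 'I_2 -> Omega -> R) (tape : nat -> 'I_2 -> Omega -> R)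
  (a : nat -> Omega -> 'I_2) (T : nat) :
  reward_family D ->
  (forall v : R, measurable_fun [set x : R | 0 <= x <= 1] (fun x => D x v)) ->
  bandit_model P D mu tape ->
  (forall t (i : 'I_2), measurable (a t @^-1` [set i])) ->
  bayes_greedy P mu a tape ->
  (\int[P]_w (mu arm2 w)%:E <= \int[P]_w (mu arm1 w)%:E)%E ->
  (\int[P]_w (mu arm1 w)%:E - \int[P]_w (mu arm2 w)%:E
     <= P [set w | forall t, (t < T)%N -> a t w = arm1])%E.
Proof.
move=> _ _ [mu_meas mu01 tape_meas _] a_meas greedy _.
exact: integral_gap_le_pulls_only_arm1.
Qed.
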